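(* Let $R$ be a Noetherian ring and $I\subset R$ an ideal. If $I^n\cap(0:I)=0$ for some $n\in\mathbb N$, then $I^n(0:I^\infty)=0$.
   Context: $0:I^\infty=\bigcup_{t\ge1}(0:I^t)$. *)

From mathcomp Require Import all_boot all_algebra.
Set Implicit Arguments. Unset Strict Implicit. Unset Printing Implicit Defensive.
Import GRing.Theory.
Local Open Scope ring_scope.

Section IdealDefs.
Variable R : comNzRingType.

Definition is_ideal (I : R -> Prop) : Prop :=
  [/\ I 0, (forall x y, I x -> I y -> I (x + y)) & (forall r x, I x -> I (r * x))].

Definition noetherian_ring : Prop :=
  forall f : nat -> R -> Prop,
    (forall k, is_ideal (f k)) ->
    (forall k x, f k x -> f k.+1 x) ->
    exists m, forall k, (m <= k)%N -> forall x, f k x -> f m x.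

Definition ideal_mul (I J : R -> Prop) : R -> Prop :=
  fun x => exists s : seq (R * R),
    (forall p, p \in s -> I p.1 /\ J p.2) /\ x = \sum_(p <- s) p.1 * p.2.

Fixpoint ideal_pow (I : R -> Prop) (n : nat) : R -> Prop :=
  match n with
  | 0%N => fun _ => True
  | n'.+1 => ideal_mul (ideal_pow I n') I
  end.

Definition ann (I : R -> Prop) : R -> Prop :=
  fun x => forall a, I a -> x * a = 0.

Definition ann_inf (I : R -> Prop) : R -> Prop :=
  fun x => exists t, (1 <= t)%N /\ ann (ideal_pow I t) x.

End IdealDefs.

From mathcomp Require Import all_boot all_algebra.
Local Open Scope ring_scope.
Import GRing.Theory.

(* If x lies in I^n and kills I^(s+1), then x * b kills I for every b in I^s,
   and x * b still lies in I^n; so x * b = 0 by hypothesis, i.e. x kills I^s.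
   Descending from s to 0 gives x = 0. Each summand of an element of
   I^n (0 : I^oo) is such an x. *)

Section IdealProducts.
Variable R : comNzRingType.
Implicit Types I J : R -> Prop.

Lemma ideal_mul_mull I J r x :
  is_ideal J -> ideal_mul I J x -> ideal_mul I J (r * x).
Proof.
case=> _ _ mulJ [s [sIJ ->]].
exists [seq (p.1, r * p.2) | p <- s]; split.
  by move=> _ /mapP [p /sIJ [Ip Jp] ->]; split=> //; apply: mulJ.
by rewrite big_map mulr_sumr; apply: eq_bigr => p _; rewrite mulrCA.
Qed.

Lemma ideal_mul_mul I J a b : I a -> J b -> ideal_mul I J (a * b).
Proof.
move=> Ia Jb; exists [:: (a, b)]; split; last by rewrite big_seq1.
by move=> p; rewrite inE => /eqP ->.
Qed.

Lemma ideal_pow_mull I n r x :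
  is_ideal I -> ideal_pow I n x -> ideal_pow I n (r * x).
Proof. by case: n => [//|n] /= idI; apply: ideal_mul_mull. Qed.

Lemma ann_pow_mulr I s x b :
  ann (ideal_pow I s.+1) x -> ideal_pow I s b -> ann I (x * b).
Proof. by move=> annx powb c Ic; rewrite -mulrA; apply/annx/ideal_mul_mul. Qed.

Lemma ideal_pow_ann_pow_eq0 I n s x :
  is_ideal I -> (forall y, ideal_pow I n y -> ann I y -> y = 0) ->
  ideal_pow I n x -> ann (ideal_pow I s) x -> x = 0.
Proof.
move=> idI trivI powx; elim: s => [|s IHs] annx.
  by rewrite -[x]mulr1; apply: annx.
apply: IHs => b powb; apply: trivI; last exact: ann_pow_mulr annx powb.
by rewrite mulrC; apply: ideal_pow_mull.
Qed.

End IdealProducts.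

Theorem lemma3p6 (R : comNzRingType) (I : R -> Prop) (n : nat) :
  noetherian_ring R -> is_ideal I ->
  (forall x, ideal_pow I n x -> ann I x -> x = 0) ->
  forall x, ideal_mul (ideal_pow I n) (ann_inf I) x -> x = 0.
Proof.
move=> _ idI trivI _ [s [sP ->]].
rewrite big_seq big1 // => p /sP [powp1 [t [_ annp2]]].
apply: (@ideal_pow_ann_pow_eq0 R I n t _ idI trivI).
  by rewrite mulrC; apply: ideal_pow_mull.
by move=> a powa; rewrite -mulrA annp2 ?mulr0.
Qed.
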